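(* Let $X$ be a non-empty finite set and $\mathcal{P}=\{P_1,\ldots,P_n\}$ a partition of $X$ indexed so that $|P_i|\le|P_{i+1}|$, with distinct block sizes $l_1<\cdots<l_r$. If $f\in\Sigma(X,\mathcal{P})$, then there exists a companion of $\overline{f}$ in the subsemigroup generated by $S(X,\mathcal{P})\cup\mathcal{B}$.
   Context: Maps are written on the right and composed left to right. $T(X,\mathcal{P})$ is the semigroup of maps $f:X\to X$ mapping each block of $\mathcal{P}$ into some block; $S(X,\mathcal{P})$ is its group of units; $\Sigma(X,\mathcal{P})$ is the set of $f\in T(X,\mathcal{P})$ whose image intersects every block. For $f\in T(X,\mathcal{P})$, $\overline{f}$ is the map on $\{1,\ldots,n\}$ with $(i)\overline{f}=j$ whenever $P_if\subseteq P_j$ (for $f\in\Sigma(X,\mathcal{P})$ this is a permutation). For $i\le r-1$, $\mathcal{B}_i$ is the set of $f\in\Sigma(X,\mathcal{P})$ for which there are blocks $P_j,P_{j'},P_k,P_{k'}$ (possibly $j=j'$ or $k=k'$) with $|P_j|=|P_{j'}|=l_i$, $|P_k|=|P_{k'}|=l_{i+1}$, such that $f$ maps $P_j$ injectively into $P_k$, maps $P_{k'}$ onto $P_{j'}$, and maps every other block bijectively onto a block of the same size; $\mathcal{B}=\bigcup_{i=1}^{r-1}\mathcal{B}_i$. For a permutation $\pi$ of $\{1,\ldots,n\}$, a companion of $\pi$ is a $g\in\Sigma(X,\mathcal{P})$ with $\overline{g}=\pi$ such that $g|_{P_i}:P_i\to P_{(i)\pi}$ is injective whenever $|P_i|\le|P_{(i)\pi}|$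 and surjective whenever $|P_i|\ge|P_{(i)\pi}|$. *)

From mathcomp Require Import all_boot.
Set Implicit Arguments. Unset Strict Implicit. Unset Printing Implicit Defensive.

(* A partition P = {P_0,...,P_(n-1)} of the finite set X is given by the
   block-assignment map blk : X -> 'I_n; P_i = block blk i.  Maps are
   finite functions {ffun X -> X}; composition is written left-to-right. *)

Section Defs.
Variables (X : finType) (n : nat) (blk : X -> 'I_n).

Definition block (i : 'I_n) : {set X} := [set x | blk x == i].

Definition rcomp (f g : {ffun X -> X}) : {ffun X -> X} := [ffun x => g (f x)].

Definition in_T (f : {ffun X -> X}) : Prop :=
  forall i, exists j, f @: block i \subset block j.

Definition in_Sigma (f : {ffun X -> X}) : Prop :=
  in_T f /\ forall i, exists x, f x \in block i.

Definition in_S (f : {ffun X -> X}) : Prop :=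
  in_T f /\ exists g, [/\ in_T g, rcomp f g = [ffun x => x]
                        & rcomp g f = [ffun x => x]].

Definition fbar (f : {ffun X -> X}) (i : 'I_n) : 'I_n :=
  odflt i [pick j | f @: block i \subset block j].

Definition block_sizes : seq nat :=
  sort leq (undup [seq #|block i| | i : 'I_n]).

Definition lsize (i : nat) : nat := nth 0 block_sizes i.

(* B_i (0-indexed: i = 0 .. r-2 corresponds to the paper's B_1 .. B_(r-1)) *)
Definition in_B_i (i : nat) (f : {ffun X -> X}) : Prop :=
  in_Sigma f /\
  exists j j' k k' : 'I_n,
    [/\ #|block j| = lsize i, #|block j'| = lsize i,
        #|block k| = lsize i.+1, #|block k'| = lsize i.+1 &
    [/\ f @: block j \subset block k, {in block j &, injective f},
        f @: block k' = block j' &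
        forall m : 'I_n, m != j -> m != k' ->
          exists m' : 'I_n, [/\ #|block m'| = #|block m|,
                                f @: block m = block m' &
                                {in block m &, injective f}]]].

Definition in_B (f : {ffun X -> X}) : Prop :=
  exists i, i.+1 < size block_sizes /\ in_B_i i f.

Definition companion (pi : 'I_n -> 'I_n) (g : {ffun X -> X}) : Prop :=
  [/\ in_Sigma g, (forall i, fbar g i = pi i) &
      forall i, (#|block i| <= #|block (pi i)| -> {in block i &, injective g})
             /\ (#|block (pi i)| <= #|block i| -> g @: block i = block (pi i))].

End Defs.

Inductive gen_sg (X : finType) (A : {ffun X -> X} -> Prop) : {ffun X -> X} -> Prop :=
  | gen_base f : A f -> gen_sg A f
  | gen_comp f g : gen_sg A f -> gen_sg A g -> gen_sg A (rcomp f g).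

From mathcomp Require Import all_boot all_fingroup.
From mathcomp Require Import zify.
Set Implicit Arguments. Unset Strict Implicit. Unset Printing Implicit Defensive.

(* For a permutation p of the block
   indices, the canonical companion of p sends the k-th point of P_i to the
   min(k, |P_(p i)| - 1)-th point of P_(p i).  Two canonical companions compose
   to a canonical companion whenever the intermediate block is never smaller
   than both end blocks.  Hence size-preserving permutations give units,
   transpositions of blocks of adjacent sizes give elements of B, and a
   transposition of blocks of sizes l < l' is a conjugate of transpositions
   through a block of intermediate size.  An arbitrary permutation is then
   reduced by a transposition at a largest moved block.  Since fbar f is a
   permutation for f in Sigma, its canonical companion is the required map. *)

Lemma surj_injective (T : finType) (f : T -> T) :
  (forall y, exists x, f x = y) -> injective f.
Proof.
move=> f_surj; have f_surjb y : exists x, f x == y.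
  by have [x <-] := f_surj y; exists x.
pose g y := xchoose (f_surjb y).
have gK : cancel g f by move=> y; apply/eqP; exact: (xchooseP (f_surjb y)).
have [g' _ gg'K] := injF_bij (can_inj gK).
have ef : f =1 g' by move=> x; rewrite -{1}(gg'K x) gK.
by move=> x y; rewrite !ef => /(can_inj gg'K).
Qed.

Section CanonicalCompanion.
Variables (X : finType) (n : nat) (blk : X -> 'I_n).
Hypothesis block_inhabited : forall i : 'I_n, exists x, blk x = i.

Local Notation B := (block blk).
Local Notation s i := #|block blk i|.
Local Notation generated :=
  (gen_sg (fun h => in_S blk h \/ in_B blk h)).

Definition elems (i : 'I_n) := enum (B i).
Definition pos x := index x (elems (blk x)).

Lemma size_elems i : size (elems i) = s i.
Proof. by rewrite /elems -cardE. Qed.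

Lemma block_size_gt0 i : 0 < s i.
Proof. by have [x <-] := block_inhabited i; apply/card_gt0P; exists x; rewrite inE. Qed.

Lemma pos_lt x : pos x < s (blk x).
Proof. by rewrite /pos -size_elems index_mem mem_enum inE. Qed.

Lemma nth_pos x x0 : nth x0 (elems (blk x)) (pos x) = x.
Proof. by rewrite (set_nth_default x) ?size_elems ?pos_lt // nth_index // mem_enum inE. Qed.

Lemma pos_inj x y : blk x = blk y -> pos x = pos y -> x = y.
Proof. by move=> exy pxy; rewrite -(nth_pos x x) pxy exy nth_pos. Qed.

Lemma blk_nth_elems i k y : k < s i -> blk (nth y (elems i) k) = i.
Proof.
move=> lt_k; have: nth y (elems i) k \in elems i by rewrite mem_nth ?size_elems.
by rewrite mem_enum inE => /eqP.
Qed.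

Lemma pos_nth_elems i k y : k < s i -> pos (nth y (elems i) k) = k.
Proof.
by move=> lt_k; rewrite /pos blk_nth_elems // index_uniq ?size_elems ?enum_uniq.
Qed.

Definition canon (p : 'I_n -> 'I_n) : {ffun X -> X} :=
  [ffun x => nth x (elems (p (blk x))) (minn (pos x) (s (p (blk x))).-1)].

Lemma canon_lt p x : minn (pos x) (s (p (blk x))).-1 < s (p (blk x)).
Proof. by have := block_size_gt0 (p (blk x)); lia. Qed.

Lemma blk_canon p x : blk (canon p x) = p (blk x).
Proof. by rewrite ffunE blk_nth_elems // canon_lt. Qed.

Lemma pos_canon p x : pos (canon p x) = minn (pos x) (s (p (blk x))).-1.
Proof. by rewrite ffunE pos_nth_elems // canon_lt. Qed.

Lemma eq_canon p q : p =1 q -> canon p = canon q.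
Proof. by move=> epq; apply/ffunP => x; rewrite !ffunE epq. Qed.

Lemma canon_id : canon id = [ffun x => x].
Proof.
apply/ffunP => x; rewrite ffunE; apply: pos_inj; first by rewrite blk_canon.
by rewrite pos_canon; have := pos_lt x; lia.
Qed.

Lemma canonM p1 p2 :
  (forall i, minn (s i) (s (p2 (p1 i))) <= s (p1 i)) ->
  rcomp (canon p1) (canon p2) = canon (p2 \o p1).
Proof.
move=> no_bottleneck; apply/ffunP => x; rewrite ffunE.
apply: pos_inj; first by rewrite !blk_canon.
rewrite !pos_canon !blk_canon /=.
have := no_bottleneck (blk x); have := pos_lt x.
have := block_size_gt0 (p1 (blk x)); have := block_size_gt0 (p2 (p1 (blk x))).
lia.
Qed.

Lemma canon_sub p i : canon p @: B i \subset B (p i).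
Proof. by apply/subsetP => y /imsetP [x]; rewrite inE => /eqP bx ->; rewrite inE blk_canon bx. Qed.

Lemma canon_inj p i : s i <= s (p i) -> {in B i &, injective (canon p)}.
Proof.
move=> le_s x y; rewrite !inE => /eqP bx /eqP ey exy.
apply: pos_inj; first by rewrite bx ey.
have := congr1 pos exy; rewrite !pos_canon bx ey.
by have := pos_lt x; have := pos_lt y; rewrite bx ey; lia.
Qed.

Lemma canon_onto p i : s (p i) <= s i -> canon p @: B i = B (p i).
Proof.
move=> le_s; apply/eqP; rewrite eqEsubset canon_sub /=.
apply/subsetP => y; rewrite inE => /eqP ey.
have lt_y : pos y < s i by have := pos_lt y; rewrite ey; lia.
apply/imsetP; exists (nth y (elems i) (pos y)); first by rewrite inE blk_nth_elems.
apply: pos_inj; first by rewrite blk_canon blk_nth_elems.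
by rewrite pos_canon blk_nth_elems // pos_nth_elems //; have := pos_lt y; rewrite ey; lia.
Qed.

Lemma canon_T p : in_T blk (canon p).
Proof. by move=> i; exists (p i); exact: canon_sub. Qed.

Lemma canon_Sigma (p : {perm 'I_n}) : in_Sigma blk (canon p).
Proof.
split=> [|j]; first exact: canon_T.
by have [x bx] := block_inhabited (p^-1 j)%g; exists x; rewrite inE blk_canon bx permKV.
Qed.

Lemma fbar_canon p i : fbar blk (canon p) i = p i.
Proof.
rewrite /fbar; case: pickP => [j sub_j | no_j] /=; last by have := no_j (p i); rewrite canon_sub.
have [x bx] := block_inhabited i.
have : canon p x \in B j by apply: (subsetP sub_j); rewrite imset_f // inE bx.
by rewrite inE blk_canon bx => /eqP.
Qed.

Lemma canon_companion (pi : 'I_n -> 'I_n) (p : {perm 'I_n}) :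
  p =1 pi -> companion blk pi (canon p).
Proof.
move=> e_p; split=> [||i]; [exact: canon_Sigma | by move=> i; rewrite fbar_canon e_p |].
by rewrite -e_p; split; [exact: canon_inj | exact: canon_onto].
Qed.

Lemma canon_S (p : {perm 'I_n}) : (forall i, s (p i) = s i) -> in_S blk (canon p).
Proof.
move=> s_p; split; first exact: canon_T.
exists (canon (p^-1)%g); split; first exact: canon_T.
  rewrite canonM -?canon_id => [|i]; last by rewrite permK s_p; lia.
  by apply: eq_canon => i /=; rewrite permK.
rewrite canonM -?canon_id => [|i]; last by rewrite -{1}(permKV p i) s_p; lia.
by apply: eq_canon => i /=; rewrite permKV.
Qed.

Lemma mem_block_sizes i : s i \in block_sizes blk.
Proof. by rewrite mem_sort mem_undup; apply/mapP; exists i; rewrite ?mem_enum. Qed.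

Lemma block_sizesP v : v \in block_sizes blk -> exists i, v = s i.
Proof. by rewrite mem_sort mem_undup => /mapP [i _ ->]; exists i. Qed.

Lemma sorted_block_sizes : sorted ltn (block_sizes blk).
Proof. by rewrite ltn_sorted_uniq_leq sort_uniq undup_uniq sort_sorted //; exact: leq_total. Qed.

Lemma adjacent_block_sizes a b : s a < s b ->
  (forall c, ~~ ((s a < s c) && (s c < s b))) ->
  exists k, [/\ k.+1 < size (block_sizes blk), lsize blk k = s a
              & lsize blk k.+1 = s b].
Proof.
move=> lt_ab no_between; set bs := block_sizes blk.
set k := index (s a) bs; set k' := index (s b) bs.
have lt_k : k < size bs by rewrite index_mem mem_block_sizes.
have lt_k' : k' < size bs by rewrite index_mem mem_block_sizes.
have nth_k : nth 0 bs k = s a by rewrite nth_index // mem_block_sizes.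
have nth_k' : nth 0 bs k' = s b by rewrite nth_index // mem_block_sizes.
have mono := sorted_ltn_nth ltn_trans 0 sorted_block_sizes.
have lt_kk' : k < k'.
  case: (ltngtP k k') => // [gt_kk'|ekk']; last by move: nth_k; rewrite ekk' nth_k'; lia.
  by have := mono k' k lt_k' lt_k gt_kk'; rewrite nth_k nth_k'; lia.
have ek' : k' = k.+1.
  case: (ltngtP k' k.+1) => // [|gt_k']; first lia.
  have lt_k1 : k.+1 < size bs by lia.
  have [c ec] := block_sizesP (mem_nth 0 lt_k1).
  have := mono k k.+1 lt_k lt_k1 (ltnSn k); have := mono k.+1 k' lt_k1 lt_k' gt_k'.
  by rewrite nth_k nth_k' ec => lt_cb lt_ac; have := no_between c; rewrite lt_ac lt_cb.
by exists k; split; rewrite -?ek'.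
Qed.

Lemma canon_tperm_B a b : s a < s b ->
  (forall c, ~~ ((s a < s c) && (s c < s b))) -> in_B blk (canon (tperm a b)).
Proof.
move=> lt_ab no_between; have [k [lt_k sa sb]] := adjacent_block_sizes lt_ab no_between.
exists k; split=> //; split; first exact: canon_Sigma.
exists a, a, b, b; split=> //; split.
- by have := canon_sub (tperm a b) a; rewrite tpermL.
- by apply: canon_inj; rewrite tpermL; lia.
- by have := @canon_onto (tperm a b) b; rewrite tpermR; apply; lia.
move=> m neq_ma neq_mb; have tm : tperm a b m = m by rewrite tpermD // eq_sym.
exists m; split=> //; last by apply: canon_inj; rewrite tm.
by have := @canon_onto (tperm a b) m; rewrite tm; apply.
Qed.

Lemma canon_conj_tperm a b c : s a < s c < s b ->
  canon (tperm a b) =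
    rcomp (rcomp (canon (tperm c b)) (canon (tperm a c))) (canon (tperm c b)).
Proof.
(* (a b) is the conjugate of (a c) by (c b), and the intermediate block of
   either composition is never smaller than both end blocks. *)
case/andP=> lt_ac lt_cb.
have [ab ac cb] : [/\ (a == b) = false, (a == c) = false & (c == b) = false].
  by split; apply/negbTE/eqP => e; move: lt_ac lt_cb; rewrite e; lia.
have neqs := (ab, ac, cb, eq_sym b a, eq_sym c a, eq_sym b c).
have tpermE (x y i : 'I_n) : tperm x y i = if i == x then y else if i == y then x else i.
  by case: tpermP => [->|->|/eqP/negbTE -> /eqP/negbTE ->]; rewrite ?eqxx //; case: eqP.
have cases_abc i : [\/ [/\ a != i, b != i & c != i], i = a, i = b | i = c].
  by case: (eqVneq a i) => [|ai]; [constructor 2 | case: (eqVneq b i) => [|bi];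
    [constructor 3 | case: (eqVneq c i) => [|ci]; [constructor 4 | constructor 1]]].
do 2![rewrite canonM => [|i]; last first;
  [case: (cases_abc i) => [[ai bi ci]|->|->|->] /=;
   [by rewrite !tpermD ?geq_minl | by rewrite !tpermE ?eqxx ?neqs /= ?eqxx ?neqs; lia ..]|]].
have -> : tperm a b = (tperm a c ^ tperm c b)%g.
  by rewrite tpermJ tpermL tpermD // eq_sym ?ab ?ac.
by apply: eq_canon => i; rewrite conjgE !permM tpermV.
Qed.

Lemma canon_tperm_gen_lt a b : s a < s b -> generated (canon (tperm a b)).
Proof.
move: {2}(s b - s a) (leqnn (s b - s a)) => d.
elim: d a b => [|d IHd] a b le_d lt_ab; first lia.
case: (boolP [exists c, (s a < s c) && (s c < s b)]) => [|no_between]; last first.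
  by apply/gen_base/or_intror/canon_tperm_B => //; move: no_between; rewrite negb_exists => /forallP.
case/existsP=> c /andP [lt_ac lt_cb].
rewrite (@canon_conj_tperm a b c) ?lt_ac //.
by apply: gen_comp; [apply: gen_comp |]; apply: IHd => //; lia.
Qed.

Lemma canon_tperm_gen a b : s a <= s b -> generated (canon (tperm a b)).
Proof.
rewrite leq_eqVlt => /predU1P [eq_ab | lt_ab]; last exact: canon_tperm_gen_lt.
by apply/gen_base/or_introl/canon_S => i; case: tpermP => [->|->|].
Qed.

Lemma canon_perm_gen (p : {perm 'I_n}) : generated (canon p).
Proof.
elim: {p}_.+1 {-2}p (ltnSn #|[set i | p i != i]|) => // d IHd p lt_d.
case: (pickP [pred i | p i != i]) => [y0 moved_y0 | fixed]; last first.
  by apply/gen_base/or_introl/canon_S => i; have /negbFE/eqP -> := fixed i.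
(* Split off the transposition (a y) with p a = y, where y is a largest moved
   block: then s a <= s y, and p * (a y) fixes a and every point p fixes. *)
have [y moved_y max_y] := @arg_maxnP _ y0 [pred i | p i != i] (fun i => s i) moved_y0.
set a := (p^-1)%g y; have pa : p a = y by rewrite permKV.
have ne_ya : y != a by apply: contraNneq moved_y => ya; rewrite [X in p X]ya pa.
have le_ay : s a <= s y by apply: max_y; rewrite /= pa.
set t := tperm a y.
have -> : canon p = rcomp (canon (p * t)%g) (canon t).
  rewrite canonM => [|i]; first by apply: eq_canon => i /=; rewrite permM tpermK.
  rewrite /= permM tpermK; case: tpermP => [->|pi_y|]; [lia | | lia].
  by rewrite -pa in pi_y; rewrite (perm_inj pi_y) pa; lia.
apply: gen_comp; last exact: canon_tperm_gen.
apply: IHd; rewrite -ltnS; apply: leq_trans lt_d; rewrite ltnS.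
apply/proper_card/properP; split.
  apply/subsetP => i; rewrite !inE permM; apply: contraNneq => pi_i.
  rewrite pi_i tpermD //; first by apply: contra_neq ne_ya => ai; rewrite -pa ai.
  by apply: contra_neq moved_y => yi; rewrite yi.
by exists a; rewrite !inE ?permM pa ?tpermR ?eqxx.
Qed.

End CanonicalCompanion.

Lemma fbar_sub (X : finType) n (blk : X -> 'I_n) (f : {ffun X -> X}) i :
  in_T blk f -> f @: block blk i \subset block blk (fbar blk f i).
Proof.
move=> /(_ i) [j sub_j]; rewrite /fbar; case: pickP => [//|no_j].
by have := no_j j; rewrite sub_j.
Qed.

Lemma fbar_surj (X : finType) n (blk : X -> 'I_n) (f : {ffun X -> X}) :
  in_Sigma blk f -> forall j, exists i, fbar blk f i = j.
Proof.
move=> [f_T f_hits] j; have [x fx_j] := f_hits j; exists (blk x).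
have : f x \in block blk (fbar blk f (blk x)).
  by apply: (subsetP (fbar_sub (blk x) f_T)); rewrite imset_f // inE.
by move: fx_j; rewrite !inE => /eqP <- /eqP.
Qed.

Theorem lemma4p4 (X : finType) (n : nat) (blk : X -> 'I_n) :
  0 < #|X| ->
  (forall i : 'I_n, exists x, blk x = i) ->
  (forall i j : 'I_n, i <= j -> #|block blk i| <= #|block blk j|) ->
  forall f : {ffun X -> X}, in_Sigma blk f ->
  exists g : {ffun X -> X},
    companion blk (fbar blk f) g /\
    gen_sg (fun h => in_S blk h \/ in_B blk h) g.
Proof.
move=> _ block_inhabited _ f f_Sigma.
have fbar_inj := surj_injective (fbar_surj f_Sigma).
exists (canon blk (perm fbar_inj)); split.
  by apply: canon_companion => // i; rewrite permE.
exact: canon_perm_gen.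
Qed.
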